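(* Let $V$ be a finite-dimensional real vector space with a linear action of $\mathbb H$, $\Lambda\subset V$ a lattice of maximal rank, and $W\subset V$ a real subspace. For $L\in\mathbb H$ with $L^2=-1$ let $W_{\mathbb Q,L}$ be the minimal rational $L$-invariant subspace of $V$ containing $W$, and $W_{\mathbb Q,\mathbb H}$ the minimal rational $\mathbb H$-invariant subspace of $V$ containing $W$. Then $W_{\mathbb Q,L}=W_{\mathbb Q,\mathbb H}$ for all such $L$ except for at most countably many.
   Context: A real subspace $U\subset V$ is rational if $\Lambda\cap U$ is a lattice of maximal rank in $U$. *)

From HB Require Import structures.
From mathcomp Require Import all_boot all_order all_algebra.
From mathcomp Require Import boolp classical_sets cardinality reals.
Set Implicit Arguments. Unset Strict Implicit. Unset Printing Implicit Defensive.
Import Order.TTheory GRing.Theory Num.Theory.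
Local Open Scope ring_scope.
Local Open Scope classical_set_scope.

Record quat (R : Type) := Quat { qr : R; qi : R; qj : R; qk : R }.

Section Quat.
Variable R : realType.

Definition qadd (p q : quat R) : quat R :=
  Quat (qr p + qr q) (qi p + qi q) (qj p + qj q) (qk p + qk q).
Definition qscale (a : R) (p : quat R) : quat R :=
  Quat (a * qr p) (a * qi p) (a * qj p) (a * qk p).
Definition qone : quat R := Quat 1 0 0 0.
Definition qmul (p q : quat R) : quat R :=
  Quat (qr p * qr q - qi p * qi q - qj p * qj q - qk p * qk q)
       (qr p * qi q + qi p * qr q + qj p * qk q - qk p * qj q)
       (qr p * qj q - qi p * qk q + qj p * qr q + qk p * qi q)
       (qr p * qk q + qi p * qj q - qj p * qi q + qk p * qr q).
Definition qopp (p : quat R) : quat R := qscale (-1) p.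

Variable n : nat.

(* A linear (left) action of H on V = R^n (row vectors): q . v := v *m rho q.
   R-linear, unital, and (p q) . v = p . (q . v). *)
Definition is_quat_action (rho : quat R -> 'M[R]_n) : Prop :=
  [/\ forall a p q, rho (qadd (qscale a p) q) = a *: rho p + rho q,
      rho qone = 1%:M
    & forall p q, rho (qmul p q) = rho q *m rho p].

Definition full_lattice_in (U : 'M[R]_n) (S : set 'rV[R]_n) : Prop :=
  exists (k : nat) (B : 'M[R]_(k, n)),
    [/\ row_free B, (B == U)%MS &
        S = [set v : 'rV[R]_n | exists z : 'rV[int]_k, v = map_mx (fun x : int => x%:~R) z *m B]].

Definition full_lattice (Lam : set 'rV[R]_n) : Prop :=
  full_lattice_in 1%:M Lam.

Definition rational (Lam : set 'rV[R]_n) (U : 'M[R]_n) : Prop :=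
  full_lattice_in U (Lam `&` [set v : 'rV[R]_n | (v <= U)%MS]).

Definition inv_L (rho : quat R -> 'M[R]_n) (L : quat R) (U : 'M[R]_n) : Prop :=
  (U *m rho L <= U)%MS.

Definition inv_H (rho : quat R -> 'M[R]_n) (U : 'M[R]_n) : Prop :=
  forall q, (U *m rho q <= U)%MS.

Definition minimal_rational (Lam : set 'rV[R]_n) (P : 'M[R]_n -> Prop)
    (m : nat) (W : 'M[R]_(m, n)) (U : 'M[R]_n) : Prop :=
  [/\ rational Lam U, P U, (W <= U)%MS &
      forall U', rational Lam U' -> P U' -> (W <= U')%MS -> (U <= U')%MS].

End Quat.

From Pilot Require Import Defs.
From HB Require Import structures.
From mathcomp Require Import all_boot all_order all_algebra.
From mathcomp Require Import boolp classical_sets cardinality reals.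
From mathcomp Require Import ring lra zify.
Import Order.TTheory GRing.Theory Num.Theory.
Local Open Scope ring_scope.
Local Open Scope classical_set_scope.
Set Implicit Arguments. Unset Strict Implicit. Unset Printing Implicit Defensive.

(* If L^2 = -1 and every rational L-invariant subspace is H-invariant, then rational
   L-invariant and rational H-invariant subspaces are the same, so the minimal ones
   containing W agree (they exist since rational subspaces are closed under
   intersection).  Otherwise some rational U is L-invariant but not H-invariant.  Two
   imaginary units L1 <> +-L2 generate H as an algebra, so such a U is L-invariant for
   at most the two units +-L.  A rational subspace is spanned by integer combinations of
   a basis of Lambda (the Smith normal form provides a basis of Lambda \cap U), so there
   are countably many of them, and the exceptional units form a countable set. *)

Section Quaternions.
Variable R : realType.
Implicit Types (p q L : quat R) (x y z : R).

Lemma quat_eq p q :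
  qr p = qr q -> qi p = qi q -> qj p = qj q -> qk p = qk q -> p = q.
Proof. by case: p q => a b c d [a' b' c' d'] /= -> -> -> ->. Qed.

Lemma sqr_eq0 x : x ^+ 2 = 0 -> x = 0.
Proof. by move/eqP; rewrite sqrf_eq0 => /eqP. Qed.

Lemma sum3_sqr_eq0 x y z :
  x ^+ 2 + y ^+ 2 + z ^+ 2 = 0 -> [/\ x = 0, y = 0 & z = 0].
Proof. by move=> h; split; apply: sqr_eq0; nra. Qed.

Lemma qsqrN1_pure_unit L : qmul L L = qopp (qone R) ->
  qr L = 0 /\ qi L ^+ 2 + qj L ^+ 2 + qk L ^+ 2 = 1.
Proof.
case: L => a b c d [/= e1 e2 e3 e4].
have a0 : a = 0 by apply: sqr_eq0; nra.
by subst; split=> //; lra.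
Qed.

Lemma parallel_unit_vectors (a1 a2 a3 b1 b2 b3 : R) :
  a1 ^+ 2 + a2 ^+ 2 + a3 ^+ 2 = 1 -> b1 ^+ 2 + b2 ^+ 2 + b3 ^+ 2 = 1 ->
  a2 * b3 - a3 * b2 = 0 -> a3 * b1 - a1 * b3 = 0 -> a1 * b2 - a2 * b1 = 0 ->
  exists2 s, s = 1 \/ s = -1 & [/\ b1 = s * a1, b2 = s * a2 & b3 = s * a3].
Proof.
move=> na nb c1 c2 c3; pose t := a1 * b1 + a2 * b2 + a3 * b3.
(* b |a|^2 = (a.b) a - a x (a x b) *)
have [e1 e2 e3] : [/\ b1 = t * a1, b2 = t * a2 & b3 = t * a3].
  split.
  - have: b1 * (a1 ^+ 2 + a2 ^+ 2 + a3 ^+ 2) =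
          t * a1 - (a2 * (a1 * b2 - a2 * b1) - a3 * (a3 * b1 - a1 * b3)).
      by rewrite /t; ring.
    by rewrite na c2 c3 !mulr0 !subr0 mulr1.
  - have: b2 * (a1 ^+ 2 + a2 ^+ 2 + a3 ^+ 2) =
          t * a2 - (a3 * (a2 * b3 - a3 * b2) - a1 * (a1 * b2 - a2 * b1)).
      by rewrite /t; ring.
    by rewrite na c1 c3 !mulr0 !subr0 mulr1.
  - have: b3 * (a1 ^+ 2 + a2 ^+ 2 + a3 ^+ 2) =
          t * a3 - (a1 * (a3 * b1 - a1 * b3) - a2 * (a2 * b3 - a3 * b2)).
      by rewrite /t; ring.
    by rewrite na c1 c2 !mulr0 !subr0 mulr1.
exists t => //.
have : (t - 1) * (t + 1) = 0 by rewrite e1 e2 e3 in nb; nra.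
by move/eqP; rewrite mulf_eq0 => /orP[] /eqP h; [left | right]; lra.
Qed.

Lemma two_units_generate (P : quat R -> Prop) L1 L2 :
  P (qone R) -> (forall a p, P p -> P (qscale a p)) ->
  (forall p q, P p -> P q -> P (qadd p q)) ->
  (forall p q, P p -> P q -> P (qmul p q)) ->
  qmul L1 L1 = qopp (qone R) -> qmul L2 L2 = qopp (qone R) ->
  L2 <> L1 -> L2 <> qopp L1 -> P L1 -> P L2 -> forall q, P q.
Proof.
move=> P1 PZ PD PM /qsqrN1_pure_unit[+ n1] /qsqrN1_pure_unit[+ n2].
case: L1 n1 => [r1 a1 a2 a3] /= n1 -> {r1}; case: L2 n2 => [r2 b1 b2 b3] /= n2 -> {r2}.
move=> neq neqN PL1 PL2 [x0 x1 x2 x3].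
pose c1 := a2 * b3 - a3 * b2; pose c2 := a3 * b1 - a1 * b3; pose c3 := a1 * b2 - a2 * b1.
pose D := c1 ^+ 2 + c2 ^+ 2 + c3 ^+ 2.
have D_neq0 : D != 0.
  apply/eqP => /sum3_sqr_eq0[h1 h2 h3].
  have [s [] -> [? ? ?]] := parallel_unit_vectors n1 n2 h1 h2 h3; subst.
    by apply: neq; apply: quat_eq => /=; rewrite ?mul1r.
  by apply: neqN; apply: quat_eq => /=; rewrite ?mulN1r ?mulr0 ?oppr0.
(* C is the pure quaternion with vector part c = a x b; the coordinates of a vector
   in the basis (a, b, c) are given by Cramer's rule, with determinant |c|^2 = D. *)
pose C := qadd (qmul (Quat 0 a1 a2 a3) (Quat 0 b1 b2 b3))
               (qscale (a1 * b1 + a2 * b2 + a3 * b3) (qone R)).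
have PC : P C by rewrite /C; apply: (PD); [apply: PM | apply: PZ].
pose al := (x1 * (b2 * c3 - b3 * c2) + x2 * (b3 * c1 - b1 * c3)
            + x3 * (b1 * c2 - b2 * c1)) / D.
pose be := (x1 * (c2 * a3 - c3 * a2) + x2 * (c3 * a1 - c1 * a3)
            + x3 * (c1 * a2 - c2 * a1)) / D.
pose ga := (x1 * c1 + x2 * c2 + x3 * c3) / D.
have -> : Quat x0 x1 x2 x3 = qadd (qscale x0 (qone R)) (qadd (qscale al (Quat 0 a1 a2 a3))
                               (qadd (qscale be (Quat 0 b1 b2 b3)) (qscale ga C))).
  move: D_neq0; rewrite /al /be /ga /D /c1 /c2 /c3 => D_neq0.
  by apply: quat_eq => /=; field.
by apply: (PD); [apply: PZ | apply: (PD); [apply: PZ | apply: (PD); apply: PZ]].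
Qed.

End Quaternions.

Lemma stablemx_cap (F : fieldType) m1 m2 n (U : 'M[F]_(m1, n)) (V : 'M[F]_(m2, n)) f :
  stablemx U f -> stablemx V f -> stablemx (U :&: V)%MS f.
Proof. by move=> sU sV; apply: submx_trans (capmxMr _ _ _) (capmxS sU sV). Qed.

Section QuaternionAction.
Variables (R : realType) (n : nat) (rho : quat R -> 'M[R]_n).
Hypothesis rho_action : is_quat_action rho.
Implicit Types (p q L : quat R) (U : 'M[R]_n).

Lemma rho_linear a p q : rho (qadd (qscale a p) q) = a *: rho p + rho q.
Proof. by case: rho_action. Qed.

Lemma rho0 : rho (Quat 0 0 0 0) = 0.
Proof.
have -> : Quat 0 0 0 0 = qadd (qscale (-1) (qone R)) (qone R).
  by apply: quat_eq; rewrite /= ?mulr0 ?mulr1 ?addr0 ?addNr.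
by rewrite rho_linear scaleN1r addNr.
Qed.

Lemma rhoZ a p : rho (qscale a p) = a *: rho p.
Proof.
have qadd0 q : qadd q (Quat 0 0 0 0) = q by apply: quat_eq; rewrite /= addr0.
by rewrite -[qscale a p]qadd0 rho_linear rho0 addr0.
Qed.

Lemma rhoD p q : rho (qadd p q) = rho p + rho q.
Proof.
have -> : qadd p q = qadd (qscale 1 p) q by apply: quat_eq; rewrite /= !mul1r.
by rewrite rho_linear scale1r.
Qed.

Lemma rhoM p q : rho (qmul p q) = rho q *m rho p.
Proof. by case: rho_action. Qed.

Lemma rho1 : rho (qone R) = 1%:M.
Proof. by case: rho_action. Qed.

Lemma inv_H_two_units U L1 L2 :
  qmul L1 L1 = qopp (qone R) -> qmul L2 L2 = qopp (qone R) ->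
  L2 <> L1 -> L2 <> qopp L1 ->
  stablemx U (rho L1) -> stablemx U (rho L2) -> inv_H rho U.
Proof.
apply: two_units_generate => [|a p|p q|p q]; rewrite ?rho1 ?rhoZ ?rhoD ?rhoM.
- exact: stablemxC.
- by rewrite -mul_scalar_mx; apply/stablemxM/stablemxC.
- exact: stablemxD.
- by move=> sp sq; apply: stablemxM.
Qed.

Lemma countable_nonstable_units (F : set 'M[R]_n) : countable F ->
  countable [set L : quat R | qmul L L = qopp (qone R) /\
                              exists2 U, F U & stablemx U (rho L) /\ ~ inv_H rho U].
Proof.
move=> cF; pose E U := [set L : quat R | qmul L L = qopp (qone R) /\
                                         stablemx U (rho L) /\ ~ inv_H rho U].
apply: (@sub_countable _ _ _ (\bigcup_(U in F) E U)).
  by apply: subset_card_le => L [sqL [U FU stL]]; exists U.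
apply: bigcup_countable => // U _; apply: finite_set_countable.
have [[L1 [sq1 [st1 nH1]]]|noL] := pselect (exists L1, E U L1); last first.
  by apply: (sub_finite_set (B := set0)) => // L EL; apply: noL; exists L.
apply: (sub_finite_set _ (finite_set2 L1 (qopp L1))) => L [sq [st nH]].
have [->|ne] := pselect (L = L1); first by left.
have [->|neN] := pselect (L = qopp L1); first by right.
by case: nH1; apply: (inv_H_two_units sq1 sq).
Qed.

End QuaternionAction.

Lemma sorted_dvdz_nth0 (d : seq int) i : sorted dvdz d ->
  (find (fun x : int => x == 0) d <= i)%N -> d`_i = 0.
Proof.
move=> dsort fi; have [si|si] := leqP (size d) i; first by rewrite nth_default.
have hf := leq_ltn_trans fi si.
have /eqP d0 := nth_find 0 (etrans (has_find _ _) hf).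
have := sorted_leq_nth dvdz_trans dvdzz 0 dsort _ _ hf si fi.
by rewrite d0 dvd0z => /eqP.
Qed.

Section IntegralRowSpaces.
Variable R : numFieldType.
Local Notation ZR M := (map_mx (fun x : int => x%:~R : R) M).

Lemma pid_mx_eqmx m n r : (r <= m)%N ->
  ((pid_mx r : 'M[R]_(m, n)) :=: (pid_mx r : 'M[R]_(r, n)))%MS.
Proof.
move=> rm; apply/eqmxP/andP; split.
  have -> : pid_mx r = (pid_mx r : 'M[R]_(m, r)) *m (pid_mx r : 'M[R]_(r, n)).
    by rewrite mul_pid_mx !minnn.
  exact: submxMl.
have -> : pid_mx r = (pid_mx r : 'M[R]_(r, m)) *m (pid_mx r : 'M[R]_(m, n)).
  by rewrite mul_pid_mx minnn (minn_idPr rm).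
exact: submxMl.
Qed.

Lemma map_intmx_unit m (A : 'M[int]_m) : A \in unitmx -> ZR A \in unitmx.
Proof.
rewrite !unitmxE (det_map_mx (GRing.RMorphism.clone _ _ (fun x : int => x%:~R : R) _)).
exact: rmorph_unit.
Qed.

Lemma map_intmx_inj m n : injective (fun A : 'M[int]_(m, n) => ZR A).
Proof.
move=> A B /matrixP eAB; apply/matrixP => i j.
by have := eAB i j; rewrite !mxE => /intr_inj.
Qed.

Lemma smith_diag_eqmx m n (d : seq int) : sorted dvdz d ->
  exists2 r, (r <= n)%N &
    (ZR (\matrix_(i < m, j < n) (d`_i *+ (i == j :> nat))) :=: (pid_mx r : 'M_(r, n)))%MS.
Proof.
move=> dsort; pose f := find (fun x : int => x == 0) d; pose r := minn f (minn m n).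
exists r; first by rewrite /r; lia.
pose u := \row_(i < m) (if (i < r)%N then (d`_i)%:~R else 1 : R).
have u_unit : diag_mx u \in unitmx.
  rewrite unitmxE det_diag unitfE; apply/prodf_neq0 => i _; rewrite mxE.
  case: ifP => [ir|_]; last exact: oner_neq0.
  rewrite intr_eq0; apply: negbT; apply: (@before_find _ 0 (fun x : int => x == 0)).
  by move: ir; rewrite leq_min => /andP[].
have -> : ZR (\matrix_(i < m, j < n) (d`_i *+ (i == j :> nat))) = diag_mx u *m pid_mx r.
  apply/matrixP => i j; rewrite mul_diag_mx !mxE.
  have [ij|] := eqVneq (i : nat) j; last by rewrite mulr0n mulr0.
  rewrite mulr1n; case: ifP => [_|ir]; first by rewrite mulr1.
  rewrite sorted_dvdz_nth0 ?mulr0 //.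
  by have := ltn_ord i; have := ltn_ord j; move: ir; rewrite /r -ij -/f; lia.
apply: eqmx_trans (eqmxMfull _ _) (pid_mx_eqmx _ _); first by rewrite row_full_unit.
by rewrite /r; lia.
Qed.

Lemma int_row_space_basis k p (M : 'M[int]_(k, p)) :
  exists r (P : 'M[int]_(r, p)), [/\ row_free (ZR P), (ZR P :=: ZR M)%MS &
    forall y : 'rV[int]_p, (ZR y <= ZR M)%MS -> exists z : 'rV[int]_r, y = z *m P].
Proof.
have [Lm Lm_unit [Rm Rm_unit [d dsort ->]]] := int_Smith_normal_form M.
have [r rp eD] := smith_diag_eqmx k p dsort.
have Rm_free : row_free (ZR Rm) by rewrite row_free_unit map_intmx_unit.
have [P eP] : exists P : 'M[int]_(r, p), ZR P = pid_mx r *m ZR Rm.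
  by exists (pid_mx r *m Rm); rewrite map_mxM map_pid_mx.
have ePM : (ZR P :=: ZR (Lm *m \matrix_(i, j) (d`_i *+ (i == j :> nat)) *m Rm))%MS.
  rewrite eP !map_mxM -mulmxA; apply: eqmx_sym; apply: eqmx_trans (eqmxMr _ eD).
  by apply: eqmxMfull; rewrite row_full_unit map_intmx_unit.
exists r, P; split=> // [|y]; first by rewrite eP /row_free mxrankMfree // rank_pid_mx.
rewrite -ePM eP => /submxP[w ew].
have [y' ey] : exists y', ZR y = ZR y' *m ZR Rm.
  by exists (y *m invmx Rm); rewrite -map_mxM mulmxKV.
have ey' : ZR y' = w *m pid_mx r.
  by apply: (row_free_inj Rm_free); rewrite /= -ey ew mulmxA.
exists (y' *m pid_mx r); apply: map_intmx_inj.
rewrite /= ey ey' !map_mxM map_pid_mx ey' eP -!mulmxA; congr (_ *m _).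
by rewrite !mulmxA !pid_mx_id.
Qed.

Lemma eqmx_ratmx_intmx a b (A : 'M[rat]_(a, b)) :
  exists M : 'M[int]_(a, b), (map_mx (@ratr R) A :=: ZR M)%MS.
Proof.
pose d := \prod_(ij : 'I_a * 'I_b) denq (A ij.1 ij.2).
pose M := \matrix_(i, j) (numq (A i j) * \prod_(ij | ij != (i, j)) denq (A ij.1 ij.2)).
have d_neq0 : (d%:~R : R) != 0.
  by rewrite intr_eq0; apply/prodf_neq0 => ij _; apply: denq_neq0.
exists M; suff -> : ZR M = (d%:~R : R) *: map_mx (@ratr R) A by exact/eqmx_sym/eqmx_scale.
apply/matrixP => i j; rewrite !mxE /d [in RHS](bigD1 (i, j)) //= !rmorphM /ratr.
have : ((denq (A i j))%:~R : R) != 0 by rewrite intr_eq0 denq_neq0.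
by move: (numq _) (denq _) => nu de de_neq0; field.
Qed.

Lemma capmx_intmx k1 k2 p (M1 : 'M[int]_(k1, p)) (M2 : 'M[int]_(k2, p)) :
  exists M : 'M[int]_(p, p), (ZR M1 :&: ZR M2 :=: ZR M)%MS.
Proof.
pose ZQ k (M : 'M[int]_(k, p)) := map_mx (fun x : int => x%:~R : rat) M.
have ZQ_ratr k (M : 'M[int]_(k, p)) : map_mx (@ratr R) (ZQ k M) = ZR M.
  by apply/matrixP => i j; rewrite !mxE ratr_int.
have [M eM] := eqmx_ratmx_intmx (ZQ k1 M1 :&: ZQ k2 M2)%MS.
exists M; rewrite -(ZQ_ratr _ M1) -(ZQ_ratr _ M2).
exact: eqmx_trans (eqmx_sym (map_capmx _ _ _)) eM.
Qed.

End IntegralRowSpaces.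

Lemma capmxMfree (F : fieldType) m1 m2 n p
    (A : 'M[F]_(m1, n)) (B : 'M[F]_(m2, n)) (C : 'M[F]_(n, p)) :
  row_free C -> ((A :&: B) *m C :=: A *m C :&: B *m C)%MS.
Proof.
move=> C_free; apply/eqmxP; rewrite capmxMr /=.
have sC : (A *m C :&: B *m C <= C)%MS by rewrite (submx_trans (capmxSl _ _)) ?submxMl.
rewrite -(mulmxKpV sC) submxMfree // sub_capmx -!(submxMfree _ _ C_free) mulmxKpV //.
by rewrite capmxSl capmxSr.
Qed.

Section RationalSubspaces.
Variables (R : realType) (n k0 : nat) (B0 : 'M[R]_(k0, n)).
Hypotheses (B0_free : row_free B0) (B0_full : (B0 == 1%:M)%MS).
Local Notation ZR M := (map_mx (fun x : int => x%:~R : R) M).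
Let lat : set 'rV[R]_n := [set v | exists z : 'rV[int]_k0, v = ZR z *m B0].
Implicit Types U : 'M[R]_n.

Lemma rationalP U :
  Defs.rational lat U <-> exists k (M : 'M[int]_(k, k0)), (U == ZR M *m B0)%MS.
Proof.
split=> [[k [B [_ BU latU]]]|[k [M /eqmxP UM]]].
  have rowB i : exists z : 'rV[int]_k0, row i B = ZR z *m B0.
    have : (lat `&` [set v | (v <= U)%MS]) (row i B).
      by rewrite latU; exists (delta_mx 0 i); rewrite map_delta_mx -rowE.
    by case.
  have [f ef] := choice rowB; exists k, (\matrix_i f i).
  suff -> : ZR (\matrix_i f i) *m B0 = B by apply/eqmxP/eqmx_sym/eqmxP.
  by apply/row_matrixP => i; rewrite row_mul -map_row rowK ef.
have [r [P [P_free PM P_int]]] := int_row_space_basis R M.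
exists r, (ZR P *m B0); split.
- by rewrite /row_free mxrankMfree.
- exact/eqmxP/(eqmx_trans (eqmxMr _ PM) (eqmx_sym UM)).
apply/seteqP; split=> [v [[y ->]]|v [z ->]] /=.
  rewrite UM submxMfree // => /P_int[z ->].
  by exists z; rewrite map_mxM mulmxA.
split; first by exists (z *m P); rewrite map_mxM mulmxA.
by rewrite UM mulmxA submxMr // -PM submxMl.
Qed.

Lemma rational_cap U1 U2 :
  Defs.rational lat U1 -> Defs.rational lat U2 -> Defs.rational lat (U1 :&: U2)%MS.
Proof.
move=> /rationalP[k1 [M1 /eqmxP e1]] /rationalP[k2 [M2 /eqmxP e2]].
have [M eM] := capmx_intmx R M1 M2.
apply/rationalP; exists k0, M; apply/eqmxP.
apply: eqmx_trans (cap_eqmx e1 e2) _.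
exact: eqmx_trans (eqmx_sym (capmxMfree _ _ B0_free)) (eqmxMr _ eM).
Qed.

Lemma rational1 : Defs.rational lat 1%:M.
Proof.
apply/rationalP; exists k0, 1%:M; rewrite map_mx1 mul1mx.
exact/eqmxP/eqmx_sym/eqmxP.
Qed.

Lemma countable_rational_genmx : countable [set <<U>>%MS | U in Defs.rational lat].
Proof.
apply: (@sub_countable _ _ _
  (\bigcup_(k in setT) [set <<ZR M *m B0>>%MS | M in @setT 'M[int]_(k, k0)])).
  apply: subset_card_le => _ [U /rationalP[k [M /eqmxP UM]] <-].
  by exists k => //; exists M => //; apply/eq_genmx/eqmx_sym.
apply: bigcup_countable => // k _.
exact: sub_countable (card_image_le _ _) (countableP _).
Qed.

Variables (m : nat) (W : 'M[R]_(m, n)).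

Lemma exists_minimal_rational (P : 'M[R]_n -> Prop) :
  (forall U1 U2, P U1 -> P U2 -> P (U1 :&: U2)%MS) -> P 1%:M ->
  exists U, minimal_rational lat P W U.
Proof.
move=> P_cap P1; pose good U := [/\ Defs.rational lat U, P U & (W <= U)%MS].
have good_cap U1 U2 : good U1 -> good U2 -> good (U1 :&: U2)%MS.
  move=> [rU1 PU1 WU1] [rU2 PU2 WU2].
  by split; [exact: rational_cap | exact: P_cap | rewrite sub_capmx WU1].
have good1 : good 1%:M by split; rewrite ?submx1 //; exact: rational1.
have ex_rank : exists N, `[< exists U, good U /\ \rank U = N >].
  by exists (\rank (1%:M : 'M[R]_n)); apply/asboolP; exists 1%:M.
case: (ex_minnP ex_rank) => N /asboolP[U [gU <-]] rank_min.
exists U; case: (gU) => rU PU WU; split=> // U' rU' PU' WU'.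
have gV := good_cap _ _ gU (And3 rU' PU' WU').
have := rank_min _ (asboolT (ex_intro _ _ (conj gV erefl))).
rewrite (geq_leqif (mxrank_leqif_sup (capmxSl U U'))) => /submx_trans; apply.
exact: capmxSr.
Qed.

End RationalSubspaces.

Lemma eq_minimal_rational (R : realType) n (Lam : set 'rV[R]_n)
    (P Q : 'M[R]_n -> Prop) m (W : 'M[R]_(m, n)) U :
  (forall V, Defs.rational Lam V -> P V <-> Q V) ->
  minimal_rational Lam P W U -> minimal_rational Lam Q W U.
Proof.
move=> PQ [rU PU WU minU]; split=> //; first exact/PQ.
by move=> V rV /(PQ _ rV); apply: minU.
Qed.

Theorem lemma3p4 (R : realType) (n : nat) (rho : quat R -> 'M[R]_n)
    (Lam : set 'rV[R]_n) (m : nat) (W : 'M[R]_(m, n)) :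
  is_quat_action rho -> full_lattice Lam ->
  countable [set L : quat R | qmul L L = qopp (qone R) /\
     ~ (exists U : 'M[R]_n,
          minimal_rational Lam (inv_L rho L) W U /\
          minimal_rational Lam (inv_H rho) W U)].
Proof.
move=> rho_action [k0 [B0 [B0_free B0_full ->]]].
set lat := [set v : 'rV[R]_n | _].
apply: (sub_countable _ (countable_nonstable_units rho_action
                          (countable_rational_genmx B0_free))).
apply: subset_card_le => L [sqL noU]; split=> //.
apply: contrapT => stable_L_H; apply: noU.
have H_L U : Defs.rational lat U -> inv_H rho U <-> inv_L rho L U.
  move=> rU; split=> [stH|stL]; first exact: stH.
  apply: contrapT => nH; apply: stable_L_H; exists <<U>>%MS; first by exists U.
  rewrite (eqmx_stable _ (genmxE U)); split=> // stH; apply: nH => q.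
  by rewrite -(eqmx_stable _ (genmxE U)).
have [U minH] : exists U, minimal_rational lat (inv_H rho) W U.
  apply: exists_minimal_rational => // [U1 U2 sU1 sU2 q|q].
  - exact: stablemx_cap.
  - exact: submx1.
by exists U; split=> //; apply: eq_minimal_rational minH.
Qed.
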